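(* Let $m\neq n$ be nonzero integers and let $\varphi:Q(m,n)\to E(m,n)$ be the isomorphism defined below. Let $\sigma:Q(m,n)\to E(m,n)$ be the morphism extending $(X_0:X_1:X_2:X_3)\mapsto\bigl(X_0^2/X_1^2,\ X_0X_2X_3/X_1^3\bigr)$ (sending points with $X_1=0$ to the point at infinity). Then $\sigma(S)=-2\varphi(S)$ for every point $S$ of $Q(m,n)$, where $-2$ denotes the negative of the doubling map in the group law of $E(m,n)$. In particular, in the case $m=-n$, the morphism $\tau$ extending $(X_0:X_1:X_2:X_3)\mapsto\bigl(X_0^2/X_1^2,\ -X_0X_2X_3/X_1^3\bigr)$ satisfies $\tau(S)=2\varphi(S)$ for every point $S$ of $Q(-n,n)$.
   Context: $Q(m,n)\subset\mathbb{P}^3$ is the curve $X_0^2+mX_1^2=X_2^2,\ X_0^2+nX_1^2=X_3^2$ and $E(m,n)$ is the elliptic curve $y^2=x(x+m)(x+n)$ (projectively $Y^2T=X(X+mT)(X+nT)$ with coordinates $(T:X:Y)$), with neutral element the point at infinity. $\varphi:Q(m,n)\to E(m,n)$ is the isomorphism of curves extending the rational map $(X_0:X_1:X_2:X_3)\mapsto\bigl(nX_2-mX_3+(m-n)X_0\ :\ mn(X_3-X_2)\ :\ mn(m-n)X_1\bigr)$ (in coordinates $(T:X:Y)$). *)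

From HB Require Import structures.
From mathcomp Require Import all_boot all_order all_algebra all_field.
Set Implicit Arguments. Unset Strict Implicit. Unset Printing Implicit Defensive.
Import Order.TTheory GRing.Theory Num.Theory.
Local Open Scope ring_scope.

Section Curves.
Variable K : fieldType.

(* A point of P^3 is represented by a nonzero homogeneous coordinate vector
   (X0, X1, X2, X3); two vectors represent the same point iff they are
   proportional. *)
Definition vec4 := (K * K * K * K)%type.

Definition nonzero4 (v : vec4) : Prop :=
  let: (x0, x1, x2, x3) := v in ~ (x0 = 0 /\ x1 = 0 /\ x2 = 0 /\ x3 = 0).

Definition proj_eq4 (v w : vec4) : Prop :=
  exists2 c : K, c != 0 &
    let: (x0, x1, x2, x3) := v in w = (c * x0, c * x1, c * x2, c * x3).

Definition onQ (m n : K) (v : vec4) : Prop :=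
  nonzero4 v /\
  let: (x0, x1, x2, x3) := v in
  x0 ^+ 2 + m * x1 ^+ 2 = x2 ^+ 2 /\ x0 ^+ 2 + n * x1 ^+ 2 = x3 ^+ 2.

(* Points of E(m,n) : y^2 = x(x+m)(x+n).  None is the point at infinity
   (0:0:1) in coordinates (T:X:Y), i.e. the neutral element; Some (x,y) is
   the affine point (1:x:y). *)
Definition Ept := option (K * K).

Definition onE (m n : K) (P : Ept) : Prop :=
  match P with
  | None => True
  | Some (x, y) => y ^+ 2 = x * (x + m) * (x + n)
  end.

(* The projective point (T:X:Y) of P^2 (assumed nonzero and on E), written as
   an element of Ept: if T = 0 the only point of E is the point at infinity. *)
Definition of_proj (T X Y : K) : Ept :=
  if T == 0 then None else Some (X / T, Y / T).

(* Group law on E(m,n): y^2 = x^3 + (m+n) x^2 + mn x (chord-tangent law,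
   neutral element at infinity). *)
Definition Eneg (P : Ept) : Ept :=
  match P with None => None | Some (x, y) => Some (x, - y) end.

Definition Eadd (m n : K) (P Q : Ept) : Ept :=
  match P, Q with
  | None, _ => Q
  | _, None => P
  | Some (x1, y1), Some (x2, y2) =>
      if x1 == x2 then
        if y1 == - y2 then None
        else
          let l := (3%:R * x1 ^+ 2 + 2%:R * (m + n) * x1 + m * n) / (2%:R * y1) in
          let x3 := l ^+ 2 - (m + n) - x1 - x2 in
          Some (x3, l * (x1 - x3) - y1)
      else
        let l := (y2 - y1) / (x2 - x1) in
        let x3 := l ^+ 2 - (m + n) - x1 - x2 in
        Some (x3, l * (x1 - x3) - y1)
  end.

Definition phiT (m n : K) (v : vec4) : K :=
  let: (x0, x1, x2, x3) := v in n * x2 - m * x3 + (m - n) * x0.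
Definition phiX (m n : K) (v : vec4) : K :=
  let: (x0, x1, x2, x3) := v in m * n * (x3 - x2).
Definition phiY (m n : K) (v : vec4) : K :=
  let: (x0, x1, x2, x3) := v in m * n * (m - n) * x1.

(* "phi : Q(m,n) -> E(m,n) is the isomorphism of curves extending the
   rational map": phi is well defined on projective points, maps Q into E,
   is a bijection between the points of Q and of E, and agrees with the
   formula wherever the formula is defined. *)
Definition is_phi (m n : K) (phi : vec4 -> Ept) : Prop :=
  [/\ (forall v w, onQ m n v -> proj_eq4 v w -> phi v = phi w),
      (forall v, onQ m n v -> onE m n (phi v)),
      (forall v w, onQ m n v -> onQ m n w -> phi v = phi w -> proj_eq4 v w),
      (forall P, onE m n P -> exists2 v, onQ m n v & phi v = P)
    & (forall v, onQ m n v ->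
         ~ (phiT m n v = 0 /\ phiX m n v = 0 /\ phiY m n v = 0) ->
         phi v = of_proj (phiT m n v) (phiX m n v) (phiY m n v))].

Definition sigma (v : vec4) : Ept :=
  let: (x0, x1, x2, x3) := v in
  if x1 == 0 then None
  else Some (x0 ^+ 2 / x1 ^+ 2, x0 * x2 * x3 / x1 ^+ 3).

Definition tau (v : vec4) : Ept :=
  let: (x0, x1, x2, x3) := v in
  if x1 == 0 then None
  else Some (x0 ^+ 2 / x1 ^+ 2, - (x0 * x2 * x3) / x1 ^+ 3).

End Curves.

From HB Require Import structures.
From mathcomp Require Import all_boot all_order all_algebra all_field.
From mathcomp Require Import ring.
Import GRing.Theory Num.Theory.
Local Open Scope ring_scope.

(* Where phiT(S) != 0, phi S is the affine point (phiX/phiT, phiY/phiT).  If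
   moreover X1 != 0, the equations of Q(m,n) express m and n as
   (X2^2 - X0^2)/X1^2 and (X3^2 - X0^2)/X1^2; substituting them turns the
   tangent-line duplication formula for phi S into an identity of rational
   functions in X0, ..., X3.  If X1 = 0, then phiY(S) = 0, so phi S is a
   2-torsion point.  The only points with phiT = 0 are the multiples of
   (1:0:1:1); as phi is onto, one of them is the preimage of the point at
   infinity, hence all of them are.  In the last two cases both -2 phi S and
   sigma S are the point at infinity.  Finally tau = - sigma. *)

Lemma EnegK (K : fieldType) : involutive (@Eneg K).
Proof. by case=> [[x y]|] //=; rewrite opprK. Qed.

Lemma tau_sigma (K : fieldType) (v : vec4 K) : tau v = Eneg (sigma v).
Proof.
by case: v => [[[x0 x1] x2] x3]; rewrite /tau /sigma; case: eqP; rewrite //= mulNr.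
Qed.

Section Doubling.
Variables (K : fieldType) (m n : K).
Hypotheses (m_neq0 : m != 0) (n_neq0 : n != 0) (m_neq_n : m != n).

Lemma phiT_eq0 (x0 x1 x2 x3 : K) :
  onQ m n (x0, x1, x2, x3) -> phiT m n (x0, x1, x2, x3) = 0 ->
  [/\ x1 = 0, x2 = x0 & x3 = x0].
Proof.
case=> _ [E1 E2] /= T0.
have slopes : n * (x2 - x0) = m * (x3 - x0).
  by apply: subr0_eq; rewrite -T0; ring.
have prod_eq0 : m * (x3 - x0) * (x2 - x3) = 0.
  have -> : m * (x3 - x0) * (x2 - x3) =
      (m * (x3 - x0) - n * (x2 - x0)) * (x2 + x0)
      + n * (x2 ^+ 2 - x0 ^+ 2) - m * (x3 ^+ 2 - x0 ^+ 2) by ring.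
  by rewrite slopes subrr mul0r -E1 -E2; ring.
have x20 : x2 = x0.
  move/eqP: prod_eq0; rewrite !mulf_eq0 (negbTE m_neq0) /= !subr_eq0.
  case/orP=> /eqP e; move: slopes; rewrite e.
    rewrite subrr mulr0 => /eqP.
    by rewrite mulf_eq0 (negbTE n_neq0) subr_eq0 => /eqP.
  move/eqP; rewrite -subr_eq0 -mulrBl mulf_eq0 subr_eq0 eq_sym (negbTE m_neq_n).
  by rewrite subr_eq0 => /eqP.
have x30 : x3 = x0.
  move: slopes; rewrite x20 subrr mulr0 => /esym/eqP.
  by rewrite mulf_eq0 (negbTE m_neq0) subr_eq0 => /eqP.
split=> //; apply/eqP.
have : m * x1 ^+ 2 = 0 by apply: (addrI (x0 ^+ 2)); rewrite addr0 E1 x20.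
by move/eqP; rewrite mulf_eq0 (negbTE m_neq0) expf_eq0.
Qed.
Arguments phiT_eq0 {x0 x1 x2 x3}.

Hypothesis two_neq0 : 2%:R != 0 :> K.

Lemma sigma_neg_double_affine (v : vec4 K) :
  onQ m n v -> phiT m n v != 0 ->
  let P := Some (phiX m n v / phiT m n v, phiY m n v / phiT m n v) in
  sigma v = Eneg (Eadd m n P P).
Proof.
case: v => [[[x0 x1] x2] x3] vQ T0; case: vQ => _ [E1 E2].
have [x1_eq0 | x1_neq0] := eqVneq x1 0.
  by subst x1; rewrite /sigma /= !mulr0 !mul0r oppr0 !eqxx.
set T := phiT m n _ in T0 *.
have y_neq0 : phiY m n (x0, x1, x2, x3) / T != 0.
  by rewrite mulf_neq0 ?invr_eq0 // !mulf_neq0 ?subr_eq0.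
have y_neqN : (phiY m n (x0, x1, x2, x3) / T
               == - (phiY m n (x0, x1, x2, x3) / T)) = false.
  by apply/negbTE; rewrite -addr_eq0 -mulr2n -mulr_natr mulf_neq0.
rewrite /= eqxx y_neqN /sigma (negbTE x1_neq0).
have x1sq_neq0 : x1 ^+ 2 != 0 by rewrite expf_neq0.
have dm : x2 ^+ 2 - x0 ^+ 2 = m * x1 ^+ 2 by rewrite -E1 addrAC subrr add0r.
have dn : x3 ^+ 2 - x0 ^+ 2 = n * x1 ^+ 2 by rewrite -E2 addrAC subrr add0r.
have em : m = (x2 ^+ 2 - x0 ^+ 2) / x1 ^+ 2 by rewrite dm mulfK.
have en : n = (x3 ^+ 2 - x0 ^+ 2) / x1 ^+ 2 by rewrite dn mulfK.
have Tx1 : n * x1 ^+ 2 * x2 - m * x1 ^+ 2 * x3 + (m * x1 ^+ 2 - n * x1 ^+ 2) * x0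
           = x1 ^+ 2 * T by rewrite /T /=; ring.
rewrite /T /= em en; congr (Some (_, _));
  by field; rewrite dm dn Tx1 -mulrBl !mulf_eq0 subr_eq0 (negbTE T0)
    (negbTE m_neq0) (negbTE n_neq0) (negbTE m_neq_n) (negbTE x1_neq0).
Qed.

Variable phi : vec4 K -> Ept K.
Hypothesis phiP : is_phi m n phi.

Lemma is_phi_affine (v : vec4 K) : onQ m n v -> phiT m n v != 0 ->
  phi v = Some (phiX m n v / phiT m n v, phiY m n v / phiT m n v).
Proof.
case: phiP => _ _ _ _ phi_formula vQ T0.
rewrite phi_formula //; first by rewrite /of_proj (negbTE T0).
by case=> T0'; rewrite T0' eqxx in T0.
Qed.

Lemma is_phi_neutral (x0 : K) : x0 != 0 -> phi (x0, 0, x0, x0) = None.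
Proof.
move=> x0_neq0; have [phi_proj _ _ phi_onto _] := phiP.
have [[[[y0 y1] y2] y3] vQ phi_v] := phi_onto None I.
have [T0 | T0] := eqVneq (phiT m n (y0, y1, y2, y3)) 0; last first.
  by rewrite is_phi_affine in phi_v.
have [y10 y20 y30] := phiT_eq0 vQ T0; subst y1 y2 y3.
have y0_neq0 : y0 != 0.
  by case: vQ => nz _; apply/eqP=> y00; apply: nz; rewrite y00.
rewrite -phi_v; symmetry; apply: phi_proj => //.
exists (x0 / y0); first by rewrite mulf_neq0 ?invr_eq0.
by rewrite mulr0 divfK.
Qed.

Lemma sigma_neg_double (S : vec4 K) :
  onQ m n S -> sigma S = Eneg (Eadd m n (phi S) (phi S)).
Proof.
move=> SQ; have [T0 | T0] := eqVneq (phiT m n S) 0.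
  case: S SQ T0 => [[[x0 x1] x2] x3] SQ T0.
  have [x10 x20 x30] := phiT_eq0 SQ T0; subst x1 x2 x3.
  have x0_neq0 : x0 != 0.
    by case: SQ => nz _; apply/eqP=> x00; apply: nz; rewrite x00.
  by rewrite is_phi_neutral // /sigma eqxx.
by rewrite is_phi_affine // sigma_neg_double_affine.
Qed.

End Doubling.
Arguments sigma_neg_double {K m n} _ _ _ _ {phi}.

Theorem mainTheorem4 (m n : int) :
  m != 0 -> n != 0 -> m != n ->
  forall phi : vec4 algC -> Ept algC,
    is_phi (m%:~R) (n%:~R) phi ->
    (forall S, onQ (m%:~R) (n%:~R) S ->
       sigma S = Eneg (Eadd (m%:~R) (n%:~R) (phi S) (phi S))) /\
    (m = - n ->
       forall S, onQ (m%:~R) (n%:~R) S ->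
         tau S = Eadd (m%:~R) (n%:~R) (phi S) (phi S)).
Proof.
move=> m_neq0 n_neq0 m_neq_n phi phiP.
have mR_neq0 : m%:~R != 0 :> algC by rewrite intr_eq0.
have nR_neq0 : n%:~R != 0 :> algC by rewrite intr_eq0.
have mR_neq_nR : m%:~R != n%:~R :> algC by rewrite eqr_int.
have two_neq0 : 2%:R != 0 :> algC by rewrite pnatr_eq0.
have sigmaP := sigma_neg_double mR_neq0 nR_neq0 mR_neq_nR two_neq0 phiP.
split=> // _ S SQ.
by rewrite tau_sigma sigmaP // EnegK.
Qed.
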